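(* Let $A=(a_0,\dots,a_{n-1})$ be an array of pairwise distinct numbers, $k_1<k_2$ positive integers. Consider an iteration of Cover-approx$(A,k_1,k_2)$ whose computed suffix is $(b,c)$, and suppose the next iteration computes the prefix $(b,d)$. Let $Y=(y_1,\dots,y_{k_1})$ be the lexicographically minimal (with respect to the sequence of positions) increasing subsequence of length $k_1$ of $(a_b,\dots,a_c)$, and $X'=(x'_1,\dots,x'_{k_2})$ the lexicographically minimal increasing subsequence of length $k_2$ of $(a_b,\dots,a_d)$, where $y_t,x'_t$ denote positions. Then $x'_i\ge y_i$ for all $1\le i\le k_1$.
   Context: For $i\le j$, $\mathrm{LIS}(i,j)$ denotes the length of a longest increasing subsequence of $(a_i,\dots,a_j)$. Cover-approx$(A,k_1,k_2)$: set $C=\emptyset$, $i=0$. Repeat: let $j$ be the smallest index $\ge i$ with $\mathrm{LIS}(i,j)\ge k_2$; if none exists, return $C$. Let $q$ be the largest index $\le j$ with $\mathrm{LIS}(q,j)\ge k_1$. Add the segment $(q,j,L)$ to $C$, where $L$ is a longest increasing subsequence of $(a_q,\dots,a_j)$, and set $i=q$. In an iteration, $(i,j)$ is called the computed prefix and $(q,j)$ the computed suffix. *)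

From mathcomp Require Import all_boot all_order all_algebra.
Set Implicit Arguments. Unset Strict Implicit. Unset Printing Implicit Defensive.
Import Order.TTheory GRing.Theory Num.Theory.

Section Defs.
Variable R : realDomainType.
Variable A : seq R.

Definition a (p : nat) : R := nth 0%R A p.

Definition inc_sub (lo hi : nat) (s : seq nat) : Prop :=
  sorted ltn s /\
  (forall p, p \in s -> (lo <= p) && (p <= hi) && (p < size A)) /\
  sorted (fun p q => (a p < a q)%R) s.

Definition lis_ge (lo hi k : nat) : Prop :=
  exists s, inc_sub lo hi s /\ k <= size s.

Definition lex_lt (s t : seq nat) : Prop :=
  exists m, m < size s /\ take m s = take m t /\ nth 0 s m < nth 0 t m.

Definition lexmin_inc_sub (k lo hi : nat) (s : seq nat) : Prop :=
  inc_sub lo hi s /\ size s = k /\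
  forall t, inc_sub lo hi t -> size t = k -> s = t \/ lex_lt s t.

Variables k1 k2 : nat.

(* j is the end of the computed prefix (i, j): smallest j >= i with
   LIS(i, j) >= k2 *)
Definition computed_prefix (i j : nat) : Prop :=
  i <= j < size A /\ lis_ge i j k2 /\
  forall j', i <= j' < j -> ~ lis_ge i j' k2.

(* q is the start of the computed suffix (q, j): largest q <= j with
   LIS(q, j) >= k1 *)
Definition computed_suffix (j q : nat) : Prop :=
  q <= j /\ lis_ge q j k1 /\
  forall q', q < q' <= j -> ~ lis_ge q' j k1.

(* values taken by the variable i at the start of an iteration of
   Cover-approx(A, k1, k2) *)
Inductive iter_start : nat -> Prop :=
| iter_start0 : iter_start 0
| iter_startS i j q : iter_start i -> computed_prefix i j ->
    computed_suffix j q -> iter_start q.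

End Defs.

(* Two extremality
   facts drive the proof: maximality of the computed suffix (b, c) bounds every
   increasing subsequence of (a_b..a_c) by k1, and minimality of the computed
   prefix (b, d) bounds every increasing subsequence of (a_b..a_d) by k2.
   Splicing a prefix of one of X, Y with a suffix of the other would beat
   these bounds, which yields the value comparisons left_pos_larger_val and
   right_pos_smaller_val between x_j and y_j (here distinctness of A is used).
   Now suppose x_t < y_t.  Walking right from t we reach a crossing index J:
   X is strictly left of Y at J-1 and weakly right at J (or J = k1).  At a
   crossing both splices X[<J] ++ Y[>=J] and Y[<J] ++ X[>=J] are legal
   competitors of Y and X respectively, so lexicographic minimality of both
   forces Y and X to agree below J, contradicting x_t < y_t.  The argument
   only uses the suffix (b, c) and the following prefix (b, d); the earlier
   history of the iteration is irrelevant. *)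

From mathcomp Require Import all_boot all_order all_algebra.
From mathcomp Require Import zify.
Import Order.TTheory GRing.Theory Num.Theory.
Set Implicit Arguments. Unset Strict Implicit. Unset Printing Implicit Defensive.

Lemma sorted_cat_link (T : Type) (r : rel T) (x0 : T) (s u : seq T) :
  sorted r s -> sorted r u ->
  (0 < size s -> 0 < size u -> r (last x0 s) (head x0 u)) -> sorted r (s ++ u).
Proof.
case: s => [//|x s] /= Hs; case: u => [|y u] /= Hu Hlink; first by rewrite cats0.
by rewrite cat_path Hs /= Hlink.
Qed.

Section IncreasingSubsequences.
Variables (R : realDomainType) (A : seq R).

Lemma inc_sub_pos_lt lo hi s i j : inc_sub A lo hi s -> i < j -> j < size s ->
  nth 0 s i < nth 0 s j.
Proof.
by case=> [Hpos _] Hij Hj; apply: (sorted_ltn_nth ltn_trans) => //; apply: ltn_trans Hj.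
Qed.

Lemma inc_sub_val_lt lo hi s i j : inc_sub A lo hi s -> i < j -> j < size s ->
  (a A (nth 0 s i) < a A (nth 0 s j))%R.
Proof.
case=> [_ [_ Hval]] Hij Hj.
have val_trans : transitive (fun p q : nat => (a A p < a A q)%R).
  by move=> q p r; apply: lt_trans.
by apply: (sorted_ltn_nth val_trans) => //; apply: ltn_trans Hj.
Qed.

Lemma inc_sub_pos_le lo hi s i j : inc_sub A lo hi s -> i <= j -> j < size s ->
  nth 0 s i <= nth 0 s j.
Proof.
move=> Hs; rewrite leq_eqVlt => /orP [/eqP -> //| Hij] Hj.
exact/ltnW/(inc_sub_pos_lt Hs).
Qed.

Lemma inc_sub_nth_bounds lo hi s i : inc_sub A lo hi s -> i < size s ->
  [/\ lo <= nth 0 s i, nth 0 s i <= hi & nth 0 s i < size A].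
Proof. by case=> [_ [Hin _]] /(mem_nth 0) /Hin /andP [/andP [-> ->] ->]. Qed.

Lemma inc_sub_subseq lo hi s t : subseq t s -> inc_sub A lo hi s -> inc_sub A lo hi t.
Proof.
move=> Hts [Hpos [Hin Hval]]; split; first exact: (subseq_sorted ltn_trans Hts Hpos).
split; first by move=> p /(mem_subseq Hts) /Hin.
apply: subseq_sorted Hts Hval; by move=> q p r; apply: lt_trans.
Qed.

Lemma inc_sub_widen lo hi lo' hi' s : lo' <= lo -> hi <= hi' ->
  inc_sub A lo hi s -> inc_sub A lo' hi' s.
Proof.
move=> Hlo Hhi [Hpos [Hin Hval]]; do 2!split => //.
by move=> p /Hin /andP [/andP [H1 H2] ->]; rewrite (leq_trans Hlo H1) (leq_trans H2 Hhi).
Qed.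

Lemma inc_sub_take lo hi hi' s J : inc_sub A lo hi s -> 0 < J <= size s ->
  nth 0 s J.-1 <= hi' -> inc_sub A lo hi' (take J s).
Proof.
move=> Hs /andP [HJ0 HJ] Hlast.
have [Hpos [_ Hval]] := inc_sub_subseq (take_subseq s J) Hs.
do 2!split => //; move=> p /(nthP 0) [i]; rewrite size_takel // => Hi <-.
rewrite nth_take //; have [-> _ ->] := inc_sub_nth_bounds Hs (leq_trans Hi HJ).
have Hi_last : nth 0 s i <= nth 0 s J.-1 by apply: (inc_sub_pos_le Hs); lia.
by rewrite andbT (leq_trans Hi_last Hlast).
Qed.

Lemma inc_sub_drop lo lo' hi s K : inc_sub A lo hi s -> lo' <= nth 0 s K ->
  inc_sub A lo' hi (drop K s).
Proof.
move=> Hs Hfirst; have [Hpos [_ Hval]] := inc_sub_subseq (drop_subseq s K) Hs.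
do 2!split => //; move=> p /(nthP 0) [i]; rewrite size_drop => Hi <-.
have HKi : K + i < size s by move: Hi; rewrite ltn_subRL addnC.
rewrite nth_drop; have [_ -> ->] := inc_sub_nth_bounds Hs HKi.
have HK_i : nth 0 s K <= nth 0 s (K + i) by apply: (inc_sub_pos_le Hs); lia.
by rewrite andbT (leq_trans Hfirst HK_i).
Qed.

Lemma inc_sub_splice lo hi s u J K :
  inc_sub A lo hi (take J s) -> inc_sub A lo hi (drop K u) -> 0 < J <= size s ->
  (K < size u -> nth 0 s J.-1 < nth 0 u K /\ (a A (nth 0 s J.-1) < a A (nth 0 u K))%R) ->
  inc_sub A lo hi (take J s ++ drop K u).
Proof.
move=> [Ps [Is Vs]] [Pu [Iu Vu]] /andP [HJ0 HJ] Hlink.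
have Hlast : last 0 (take J s) = nth 0 s J.-1.
  by rewrite -nth_last size_takel // nth_take //; lia.
have Hhead : 0 < size (drop K u) -> head 0 (drop K u) = nth 0 u K.
  by move=> Hsz; rewrite -nth0 nth_drop addn0.
have HK : 0 < size (drop K u) -> K < size u by rewrite size_drop; lia.
split; [|split].
- apply: (sorted_cat_link (x0 := 0)) => // _ /[dup] /Hhead -> /HK /Hlink [+ _].
  by rewrite Hlast.
- by move=> p; rewrite mem_cat => /orP [/Is | /Iu].
- apply: (sorted_cat_link (x0 := 0)) => // _ /[dup] /Hhead -> /HK /Hlink [_ +].
  by rewrite Hlast.
Qed.

Lemma nth_splice (s u : seq nat) J K j : j < J <= size s ->
  nth 0 (take J s ++ drop K u) j = nth 0 s j.
Proof. by case/andP=> HjJ HJ; rewrite nth_cat size_takel // HjJ nth_take. Qed.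

Lemma a_inj p q : uniq A -> p < size A -> q < size A -> a A p = a A q -> p = q.
Proof. by move=> HA Hp Hq /eqP; rewrite /a nth_uniq // => /eqP. Qed.

End IncreasingSubsequences.

Lemma lexmin_first_diff_le (R : realDomainType) (A : seq R) k lo hi s w m :
  lexmin_inc_sub A k lo hi s -> inc_sub A lo hi w -> size w = k -> m < k ->
  (forall j, j < m -> nth 0 w j = nth 0 s j) -> nth 0 s m <= nth 0 w m.
Proof.
case=> [_ [Hs Hmin]] Hw Hsw Hm Hagree.
case: (Hmin w Hw Hsw) => [-> //| [m' [_ [Htake Hlt]]]].
case: (ltngtP m' m) => [Hm'm | Hmm' | Em]; last by rewrite -Em ltnW.
- by move: Hlt; rewrite Hagree // ltnn.
- have : nth 0 (take m' s) m = nth 0 (take m' w) m by rewrite Htake.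
  by rewrite !nth_take // => ->.
Qed.

(* Maximality of the computed suffix (q, j): no increasing subsequence of
   (a_q..a_j) is longer than k1, otherwise dropping its first element would
   witness LIS(q+1, j) >= k1. *)
Lemma computed_suffix_lis_le (R : realDomainType) (A : seq R) k1 j q s :
  0 < k1 -> computed_suffix A k1 j q -> inc_sub A q j s -> size s <= k1.
Proof.
move=> Hk1 [_ [_ Hlast]] Hs; rewrite leqNgt; apply/negP => Hlong.
have H1 : 1 < size s by lia.
have [Hq _ _] := inc_sub_nth_bounds Hs (ltnW H1).
have [_ Hj _] := inc_sub_nth_bounds Hs H1.
have H01 := inc_sub_pos_lt Hs (ltn0Sn 0) H1.
apply: (Hlast q.+1); first by lia.
exists (drop 1 s); split; last by rewrite size_drop; lia.
by apply: (inc_sub_drop Hs); lia.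
Qed.

(* Minimality of the computed prefix (i, j): no increasing subsequence of
   (a_i..a_j) is longer than k2, otherwise dropping its last element would
   witness LIS(i, j-1) >= k2. *)
Lemma computed_prefix_lis_le (R : realDomainType) (A : seq R) k2 i j s :
  0 < k2 -> computed_prefix A k2 i j -> inc_sub A i j s -> size s <= k2.
Proof.
move=> Hk2 [_ [_ Hfirst]] Hs; rewrite leqNgt; apply/negP => Hlong.
have [Hi _ _] := inc_sub_nth_bounds Hs (leq_ltn_trans (leq0n k2) Hlong).
have [_ Hj _] := inc_sub_nth_bounds Hs Hlong.
have H0k := inc_sub_pos_lt Hs Hk2 Hlong.
have Hpred : k2.-1 < k2 by rewrite ltn_predL.
have Hkk := inc_sub_pos_lt Hs Hpred Hlong.
apply: (Hfirst j.-1); first by lia.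
exists (take k2 s); split; last by rewrite size_takel //; lia.
by apply: (inc_sub_take Hs); lia.
Qed.

Section CrossingIndex.
Variables (k1 : nat) (Y X : seq nat).

Local Notation y := (nth 0 Y).
Local Notation x := (nth 0 X).

Definition crossing (J : nat) : Prop :=
  [/\ 0 < J <= k1, x J.-1 < y J.-1 & (J < k1 -> y J <= x J)].

(* If X is strictly left of Y at t, then some crossing index lies after t:
   walk right until X stops being strictly left of Y, or until k1. *)
Lemma crossing_after t : t < k1 -> x t < y t -> exists2 J, t < J & crossing J.
Proof.
move=> Ht; have [n Hn] : exists n, k1 = t + n.+1 by exists (k1 - t.+1); lia.
elim: n t Hn {Ht} => [|n IH] t Hn Hxy.
- exists k1; first by lia.
  by split; [lia | rewrite Hn addn1 | rewrite ltnn].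
- case: (leqP (y t.+1) (x t.+1)) => Hle.
  + by exists t.+1 => //; split => //; lia.
  + have Hn' : k1 = t.+1 + n.+1 by lia.
    by have [J HtJ HJ] := IH t.+1 Hn' Hle; exists J => //; lia.
Qed.

End CrossingIndex.

Section Crossing.
Variables (R : realDomainType) (A : seq R) (k1 k2 b c d : nat) (Y X : seq nat).
Hypotheses (A_uniq : uniq A) (k1_pos : 0 < k1) (k1_lt_k2 : k1 < k2).
Hypotheses (suffix_bc : computed_suffix A k1 c b) (prefix_bd : computed_prefix A k2 b d).
Hypotheses (Y_min : lexmin_inc_sub A k1 b c Y) (X_min : lexmin_inc_sub A k2 b d X).

Local Notation y := (nth 0 Y).
Local Notation x := (nth 0 X).

Let Y_inc : inc_sub A b c Y. Proof. by case: Y_min. Qed.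
Let size_Y : size Y = k1. Proof. by case: Y_min => _ []. Qed.
Let X_inc : inc_sub A b d X. Proof. by case: X_min. Qed.
Let size_X : size X = k2. Proof. by case: X_min => _ []. Qed.

(* x_{k1} lies beyond c: otherwise x_0..x_{k1} would be an increasing
   subsequence of (a_b..a_c) of length k1+1. *)
Lemma X_beyond_c : c < x k1.
Proof.
rewrite ltnNge; apply/negP => Hle.
have Htake : inc_sub A b c (take k1.+1 X).
  by apply: (inc_sub_take X_inc) => //; rewrite size_X.
have := computed_suffix_lis_le k1_pos suffix_bc Htake.
by rewrite size_takel ?ltnn // size_X.
Qed.

Lemma c_lt_d : c < d.
Proof.
have Hk1X : k1 < size X by rewrite size_X.
have [_ Hd _] := inc_sub_nth_bounds X_inc Hk1X.
exact: leq_trans X_beyond_c Hd.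
Qed.

(* Where X is strictly left of Y, its value is strictly larger: otherwise
   x_0..x_j followed by y_j..y_{k1-1} is too long an increasing subsequence
   of (a_b..a_c). *)
Lemma left_pos_larger_val j : j < k1 -> x j < y j -> (a A (y j) < a A (x j))%R.
Proof.
move=> Hj Hxy; have Hj2 : j < size X by rewrite size_X; lia.
have HjY : j < size Y by rewrite size_Y.
have [_ Hyc Hy] := inc_sub_nth_bounds Y_inc HjY.
have [_ _ Hx] := inc_sub_nth_bounds X_inc Hj2.
case: (ltgtP (a A (y j)) (a A (x j))) => [// | Hval | /(a_inj A_uniq Hy Hx) Heq];
  last by move: Hxy; rewrite Heq ltnn.
have Hsplice : inc_sub A b c (take j.+1 X ++ drop j Y).
  apply: inc_sub_splice.
  - by apply: (inc_sub_take X_inc) => //=; lia.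
  - exact: inc_sub_subseq (drop_subseq Y j) Y_inc.
  - by rewrite size_X; lia.
  - by move=> _; split.
have := computed_suffix_lis_le k1_pos suffix_bc Hsplice.
by rewrite size_cat size_takel // size_drop size_Y; lia.
Qed.

(* Symmetrically, where Y is strictly left of X, its value is strictly larger:
   otherwise y_0..y_j followed by x_j..x_{k2-1} is too long an increasing
   subsequence of (a_b..a_d). *)
Lemma right_pos_smaller_val j : j < k1 -> y j < x j -> (a A (x j) < a A (y j))%R.
Proof.
move=> Hj Hyx; have Hj2 : j < size X by rewrite size_X; lia.
have HjY : j < size Y by rewrite size_Y.
have [_ _ Hy] := inc_sub_nth_bounds Y_inc HjY.
have [_ _ Hx] := inc_sub_nth_bounds X_inc Hj2.
case: (ltgtP (a A (x j)) (a A (y j))) => [// | Hval | /(a_inj A_uniq Hx Hy) Heq];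
  last by move: Hyx; rewrite Heq ltnn.
have Hsplice : inc_sub A b d (take j.+1 Y ++ drop j X).
  apply: inc_sub_splice.
  - apply: inc_sub_widen (inc_sub_subseq (take_subseq Y j.+1) Y_inc) => //.
    exact: ltnW c_lt_d.
  - exact: inc_sub_subseq (drop_subseq X j) X_inc.
  - by rewrite size_Y; lia.
  - by move=> _; split.
have := computed_prefix_lis_le (ltn_trans k1_pos k1_lt_k2) prefix_bd Hsplice.
by rewrite size_cat size_takel // size_drop size_X; lia.
Qed.

Lemma right_pos_smaller_val_le j : j < k1 -> y j <= x j -> (a A (x j) <= a A (y j))%R.
Proof.
move=> Hj; rewrite leq_eqVlt => /orP [/eqP -> // | Hyx].
exact/ltW/right_pos_smaller_val.
Qed.

Lemma crossing_swap_XY J : crossing k1 Y X J -> inc_sub A b c (take J X ++ drop J Y).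
Proof.
case=> /andP [HJ0 HJk] Hxy Hafter.
have Hpred : J.-1 < J by rewrite ltn_predL.
have HJY : J.-1 < size Y by rewrite size_Y; lia.
have [_ Hyc _] := inc_sub_nth_bounds Y_inc HJY.
apply: inc_sub_splice.
- by apply: (inc_sub_take X_inc); [rewrite size_X; lia | exact: ltnW (leq_trans Hxy Hyc)].
- exact: inc_sub_subseq (drop_subseq Y J) Y_inc.
- by rewrite HJ0 size_X; lia.
- move=> HJY1; have HJk1 : J < k1 by rewrite -size_Y.
  split; first exact: ltn_trans Hxy (inc_sub_pos_lt Y_inc Hpred HJY1).
  apply: lt_le_trans (right_pos_smaller_val_le HJk1 (Hafter HJk1)).
  by apply: (inc_sub_val_lt X_inc Hpred); rewrite size_X; lia.
Qed.

Lemma crossing_swap_YX J : crossing k1 Y X J -> inc_sub A b d (take J Y ++ drop J X).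
Proof.
case=> /andP [HJ0 HJk] Hxy Hafter.
have Hpred : J.-1 < J by rewrite ltn_predL.
have HJY : J.-1 < size Y by rewrite size_Y; lia.
apply: inc_sub_splice.
- apply: inc_sub_widen (inc_sub_subseq (take_subseq Y J) Y_inc) => //.
  exact: ltnW c_lt_d.
- exact: inc_sub_subseq (drop_subseq X J) X_inc.
- by rewrite HJ0 size_Y.
- move=> HJX; split.
  + case: (ltnP J k1) => [HJk1 | HkJ].
    * have HJY1 : J < size Y by rewrite size_Y.
      exact: leq_trans (inc_sub_pos_lt Y_inc Hpred HJY1) (Hafter HJk1).
    * have [_ Hyc _] := inc_sub_nth_bounds Y_inc HJY.
      have EJ : J = k1 by apply/eqP; rewrite eqn_leq HJk HkJ.
      by rewrite EJ in Hyc *; exact: leq_ltn_trans Hyc X_beyond_c.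
  + apply: lt_trans (left_pos_larger_val _ Hxy) (inc_sub_val_lt X_inc Hpred HJX).
    by rewrite -size_Y.
Qed.

(* Both splices compete with the lexicographic minima Y and X, which forces
   Y and X to coincide before any crossing index. *)
Lemma crossing_prefix_eq J : crossing k1 Y X J -> forall j, j < J -> y j = x j.
Proof.
move=> HJ; have [/andP [_ HJk] _ _] := HJ.
have HJX : J <= size X by rewrite size_X; lia.
have HJY : J <= size Y by rewrite size_Y.
elim/ltn_ind => j IH HjJ; have Hjk := leq_trans HjJ HJk.
have Hyx : y j <= x j.
  rewrite -[x j](@nth_splice X Y J J) ?HjJ //.
  apply: lexmin_first_diff_le Y_min (crossing_swap_XY HJ) _ Hjk _.
    by rewrite size_cat size_takel // size_drop size_Y; lia.
  by move=> l Hl; rewrite nth_splice ?IH //; lia.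
have Hxy : x j <= y j.
  rewrite -[y j](@nth_splice Y X J J) ?HjJ //.
  apply: lexmin_first_diff_le X_min (crossing_swap_YX HJ) _ _ _.
  - by rewrite size_cat size_takel // size_drop size_X; lia.
  - exact: ltn_trans Hjk k1_lt_k2.
  - by move=> l Hl; rewrite nth_splice ?IH //; lia.
by apply/eqP; rewrite eqn_leq Hyx Hxy.
Qed.

End Crossing.

Theorem lemma4 (R : realDomainType) (A : seq R) (k1 k2 : nat)
  (i b c d : nat) (Y X' : seq nat) :
  uniq A -> 0 < k1 -> k1 < k2 ->
  iter_start A k1 k2 i ->
  computed_prefix A k2 i c ->
  computed_suffix A k1 c b ->
  computed_prefix A k2 b d ->
  lexmin_inc_sub A k1 b c Y ->
  lexmin_inc_sub A k2 b d X' ->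
  forall t, t < k1 -> nth 0 Y t <= nth 0 X' t.
Proof.
move=> A_uniq k1_pos k1_lt_k2 _ _ suffix_bc prefix_bd Y_min X_min t Ht.
rewrite leqNgt; apply/negP => X_left.
have [J HtJ HJ] := crossing_after Ht X_left.
have Eyx := crossing_prefix_eq A_uniq k1_pos k1_lt_k2 suffix_bc prefix_bd Y_min X_min HJ HtJ.
by move: X_left; rewrite Eyx ltnn.
Qed.
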